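(* For every $\delta>0$ and $n\in\mathbb{N}$ there exists $N\in\mathbb{N}$ such that the following holds for every $N$-partitioned hypergraph $H$ and every choice of vertices $\gamma_{ik}\in V_{ik}$, $i<k$, $i,k\in[N]$, such that the degree of $\gamma_{ik}$ in every $(i,j,k)$-triad with $i<j<k$, $j\in[N]$, is at least $\delta$: there exist an induced $n$-partitioned subhypergraph $H'$ of $H$ with index set $I\subseteq[N]$ and vertices $\alpha_{ij},\beta_{ij}\in V_{ij}$, $i<j$, $i,j\in I$, such that $\{\alpha_{ij},\beta_{jk},\gamma_{ik}\}$ is an edge in the $(i,j,k)$-triad for all $i<j<k$, $i,j,k\in I$.
   Context: An $n$-partitioned hypergraph $H$ is a finite $3$-uniform hypergraph whose vertex set is partitioned into nonempty sets $V_{ij}$, $1\le i<j\le n$, such that every edge has, for some $1\le i<j<k\le n$, exactly one vertex in each of $V_{ij}$, $V_{ik}$, $V_{jk}$; the set of such edges is the $(i,j,k)$-triad. The degree of a vertex $v\in V_{ik}$ in the $(i,j,k)$-triad is the number of edges of that triad containing $v$ divided by $|V_{ij}||V_{jk}|$. For $I\subseteq[n]$, the induced subhypergraph with index set $I$ is the $|I|$-partitioned hypergraph with parts $V_{ij}$, $i<j$, $i,j\in I$ (indexed by elements of $I$) and all edges of $H$ contained in the union of these parts. *)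

From HB Require Import structures.
From mathcomp Require Import all_boot all_order all_algebra.
From mathcomp Require Import reals.
Set Implicit Arguments. Unset Strict Implicit. Unset Printing Implicit Defensive.
Import Order.TTheory GRing.Theory Num.Theory.
Local Open Scope ring_scope.

(* Parts V_ij are indexed by pairs (i,j) of 'I_N;
   only the parts with i < j are meaningful (they are required nonempty);
   parts with i >= j are ignored everywhere. *)
Record parthyp (N : nat) := ParthHyp {
  part : 'I_N -> 'I_N -> finType;
  part_nonempty : forall i j : 'I_N, (i < j)%N -> (0 < #|part i j|)%N;
  edge : forall i j k : 'I_N, part i j -> part j k -> part i k -> bool
}.

Definition triad_deg (R : realType) (N : nat) (H : parthyp N) (i j k : 'I_N)
    (v : part H i k) : R :=
  (#|[set p : (part H i j * part H j k)%type | @edge N H i j k p.1 p.2 v]|%:R)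
  / ((#|part H i j| * #|part H j k|)%N%:R).
Arguments triad_deg R [N] H i j k v.

(* Choose K with K * delta > 2 and call x in V_ij rich towards k > j if at least
   |V_jk| / K of the b in V_jk make {x, b, gamma_ik} an edge.  Since gamma_ik has
   degree at least 2/K in the (i,j,k)-triad, at least |V_ij| / K of the x in V_ij are
   rich towards k, and by averaging a single x is rich towards a 1/K fraction of any
   set of candidate indices k.  Selecting indices greedily in increasing order, and
   fixing alpha_ij for the earlier selected i whenever j is selected, shrinks the
   candidate set by a factor at most K^M per step; this yields M indices such that
   every alpha_ij is rich towards every later selected k.  Among these, a second
   greedy round in decreasing order picks beta_jk: since each alpha_ij is rich
   towards k, averaging over V_jk gives a beta_jk forming an edge with alpha_ij and
   gamma_ik for a 1/K fraction of the remaining i.  Both rounds are instances of one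
   selection lemma, which needs ((K^M)+1)^M candidates to select M elements. *)

From mathcomp Require Import all_boot all_order all_algebra.
From mathcomp Require Import reals zify.
Set Implicit Arguments. Unset Strict Implicit. Unset Printing Implicit Defensive.
Import Order.TTheory GRing.Theory Num.Theory.

Lemma double_count (A B : finType) (P : A -> B -> bool) (S : {set B}) :
  \sum_(x : A) #|[set y in S | P x y]| = \sum_(y in S) #|[set x | P x y]|.
Proof.
under eq_bigr do rewrite -sum1dep_card big_mkcondr.
by rewrite exchange_big; apply: eq_bigr => y _; rewrite -big_mkcond sum1dep_card.
Qed.

Lemma pigeonhole_average (A B : finType) (P : A -> B -> bool) (S : {set B}) (K : nat) :
  0 < #|A| -> {in S, forall y, #|A| <= K * #|[set x | P x y]|} ->
  exists x, #|S| <= K * #|[set y in S | P x y]|.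
Proof.
move=> A_gt0 denseS.
have [x|sparse] := pickP [pred x | #|S| <= K * #|[set y in S | P x y]|]; first by exists x.
have : \sum_(x : A) (K * #|[set y in S | P x y]| + 1) <= \sum_(x : A) #|S|.
  by apply: leq_sum => x _; rewrite addn1 ltnNge; apply/negbT/sparse.
rewrite sum_nat_const big_split /= sum_nat_const -big_distrr /= double_count muln1.
have : \sum_(y in S) #|A| <= K * \sum_(y in S) #|[set x | P x y]|.
  by rewrite big_distrr; apply: leq_sum.
by rewrite sum_nat_const -/#|A|; lia.
Qed.

Lemma pair_count (A B : finType) (P : A -> B -> bool) :
  #|[set p : A * B | P p.1 p.2]| = \sum_(x : A) #|[set y | P x y]|.
Proof.
under [RHS]eq_bigr do rewrite -sum1dep_card.
by rewrite pair_big_dep -sum1dep_card.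
Qed.

Lemma dense_rows (A B : finType) (P : A -> B -> bool) (K : nat) :
  0 < #|B| -> 2 * (#|A| * #|B|) <= K * #|[set p : A * B | P p.1 p.2]| ->
  #|A| <= K * #|[set x | #|B| <= K * #|[set y | P x y]|]|.
Proof.
move=> B_gt0 dense; set G := [set x | _].
have : K * #|[set p : A * B | P p.1 p.2]| <= #|G| * (K * #|B|) + #|A| * #|B|.
  rewrite pair_count big_distrr /=.
  apply: (@leq_trans (\sum_(x : A) ((if x \in G then K * #|B| else 0) + #|B|))).
    apply: leq_sum => x _; rewrite inE.
    have [_|/ltnW //] := leqP #|B| (K * #|[set y | P x y]|).
    by rewrite (leq_trans _ (leq_addr _ _)) // leq_mul2l max_card orbT.
  by rewrite big_split -big_mkcond /= !sum_nat_const.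
move=> le_sum; rewrite -(leq_pmul2r B_gt0) -mulnA mulnCA; lia.
Qed.

Lemma iterated_pigeonhole (I U : finType) (X : I -> Type) (P : forall i, X i -> pred U)
    (K : nat) (Q : {set I}) (S : {set U}) :
  (forall i (S' : {set U}), i \in Q -> S' \subset S ->
     exists x : X i, #|S'| <= K * #|[set y in S' | P i x y]|) ->
  exists S' : {set U}, [/\ S' \subset S, #|S| <= K ^ #|Q| * #|S'| &
    forall i, i \in Q -> exists x : X i, {in S', forall y, P i x y}].
Proof.
move: {2}#|Q| (erefl #|Q|) => m; elim: m Q S => [|m IH] Q S cardQ pigeon.
  exists S; split=> //; first by rewrite cardQ expn0 mul1n.
  by move=> i; rewrite (cards0_eq cardQ) inE.
have [i iQ] : exists i, i \in Q by apply/card_gt0P; rewrite cardQ.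
have [x le_S] := pigeon i S iQ (subxx S).
set S1 := [set y in S | _] in le_S.
have S1S : S1 \subset S by apply/subsetP => y; rewrite inE => /andP[].
have cardQi : #|Q :\ i| = m by move: cardQ; rewrite (cardsD1 i) iQ => -[].
have pigeon1 i' (S' : {set U}) : i' \in Q :\ i -> S' \subset S1 ->
    exists x' : X i', #|S'| <= K * #|[set y in S' | P i' x' y]|.
  by move=> /setD1P[_ i'Q] S'S1; apply: pigeon i'Q (subset_trans S'S1 S1S).
have [S' [S'S1 le_S1 witness]] := IH _ _ cardQi pigeon1.
exists S'; split.
- exact: subset_trans S'S1 S1S.
- by rewrite cardQ expnS -mulnA (leq_trans le_S) // leq_mul2l -cardQi le_S1 orbT.
- move=> i' i'Q; have [->|ne] := eqVneq i' i.
    by exists x => y /(subsetP S'S1); rewrite inE => /andP[].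
  by apply: witness; rewrite !inE ne.
Qed.

Lemma greedy_bound_step (K M m t s s' : nat) : 0 < K -> m <= M ->
  (K ^ M).+1 ^ t.+1 <= s.+1 -> s <= K ^ m * s' -> (K ^ M).+1 ^ t <= s'.
Proof.
move=> K_gt0 le_mM; set L := K ^ M => le_s le_s'.
have L_gt0 : 0 < L by rewrite expn_gt0 K_gt0.
have le_Km : K ^ m <= L by rewrite leq_pexp2l.
have pow_gt0 : 0 < L.+1 ^ t by rewrite expn_gt0.
rewrite -(leq_pmul2l L_gt0) (leq_trans _ (leq_trans le_s' _)) ?leq_mul2r ?le_Km ?orbT //.
by move: le_s; rewrite expnS mulSn; lia.
Qed.

Lemma ltn_rev_ord (N : nat) (i j : 'I_N) : (rev_ord i < rev_ord j) = (j < i).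
Proof. by rewrite /= ltn_sub2lE ?ltnS. Qed.

Lemma sorted_enum_ord (N : nat) (I : {set 'I_N}) : sorted (fun a b : 'I_N => a < b) (enum I).
Proof.
rewrite /enum_mem -enumT; apply: sorted_filter; first exact: (@ltn_trans).
by have := iota_ltn_sorted 0 N; rewrite -val_enum_ord sorted_map.
Qed.

Lemma increasing_enum (N n : nat) (I : {set 'I_N}) : #|I| = n ->
  exists f : 'I_n -> 'I_N, {homo f : x y / x < y} /\ forall i, f i \in I.
Proof.
move=> cardI; pose f i := enum_val (cast_ord (esym cardI) i).
exists f; split=> [x y xy|i]; last exact: enum_valP.
rewrite /f !(enum_val_nth (f x)).
apply: (sorted_ltn_nth (leT := fun a b : 'I_N => a < b)) xy.
- by move=> b a c; apply: ltn_trans.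
- exact: sorted_enum_ord.
- by rewrite inE /= -cardE cardI.
- by rewrite inE /= -cardE cardI.
Qed.

Section GreedySelection.

Variables (T : finType) (rank : T -> nat) (K : nat) (D : {set T}).
Variables (W : T -> T -> Type) (R : forall p q, W p q -> pred T).
Hypothesis rank_inj : injective rank.
Hypothesis K_gt0 : 0 < K.
Hypothesis exists_witness : forall p q (S : {set T}),
  p \in D -> q \in D -> rank p < rank q -> S \subset D -> {in S, forall r, rank q < rank r} ->
  exists w : W p q, #|S| <= K * #|[set r in S | R w r]|.

Definition witnessed (X B : {set T}) :=
  forall p q, p \in X -> q \in X -> rank p < rank q ->
  exists w : W p q, [forall r in B, (rank q < rank r) ==> R w r].

Lemma witnessedS (X B B' : {set T}) : B' \subset B -> witnessed X B -> witnessed X B'.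
Proof.
move=> sB'B wX p q pX qX pq; have [w /forall_inP wB] := wX p q pX qX pq.
by exists w; apply/forall_inP => r /(subsetP sB'B) /wB.
Qed.

Definition greedy_inv (X S : {set T}) :=
  [/\ X :|: S \subset D, {in X & S, forall p r, rank p < rank r} & witnessed X (X :|: S)].

Lemma greedy_step (X S : {set T}) (j : T) :
  greedy_inv X S -> j \in S -> {in S, forall r, rank j <= rank r} ->
  exists2 S', greedy_inv (j |: X) S' & #|S :\ j| <= K ^ #|X| * #|S'|.
Proof.
move=> [XSD ltXS wX] jS j_min.
have sD p : p \in X :|: S -> p \in D by move/(subsetP XSD).
have ltj : {in S :\ j, forall r, rank j < rank r}.
  move=> r /setD1P[ne rS]; rewrite ltn_neqAle j_min // andbT.
  by apply: contra ne => /eqP/rank_inj ->.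
have pigeon p (S' : {set T}) : p \in X -> S' \subset S :\ j ->
    exists w : W p j, #|S'| <= K * #|[set r in S' | R w r]|.
  move=> pX S'Sj; apply: exists_witness; rewrite ?sD ?inE ?pX ?jS ?orbT ?ltXS //.
    exact: subset_trans S'Sj (subset_trans (subsetDl _ _) (subset_trans (subsetUr X S) XSD)).
  by move=> r /(subsetP S'Sj) /ltj.
have [S' [S'Sj le_S' wS']] := iterated_pigeonhole pigeon.
have S'S : S' \subset S := subset_trans S'Sj (subsetDl _ _).
have le_j : {in j |: X, forall p, rank p <= rank j}.
  by move=> p /setU1P[-> //|pX]; rewrite ltnW ?ltXS.
exists S' => //; split.
- rewrite -setUA subUset sub1set sD ?inE ?jS ?orbT //=.
  by apply: subset_trans XSD; rewrite setUS.
- move=> p r /setU1P[->|pX] rS'; first exact/ltj/(subsetP S'Sj).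
  exact/ltXS/(subsetP S'S).
- move=> p q pjX /setU1P[->|qX] pq.
    have pX : p \in X by case/setU1P: pjX pq => [->|//]; rewrite ltnn.
    have [w wS'w] := wS' p pX; exists w; apply/forall_inP => r.
    case/setUP => [/le_j|rS']; first by rewrite leqNgt => /negbTE ->.
    by rewrite wS'w ?implybT.
  have pX : p \in X.
    case/setU1P: pjX pq => [->|//]; rewrite ltnNge => /negP[].
    by rewrite ltnW ?ltXS.
  apply: (witnessedS _ wX) => //.
  by rewrite -setUA setUCA setUS // subUset sub1set jS S'S.
Qed.

Lemma greedy_extend (M t : nat) (X S : {set T}) :
  greedy_inv X S -> #|X| + t <= M -> (K ^ M).+1 ^ t <= #|S| ->
  exists Y : {set T}, [/\ Y \subset D, #|Y| = #|X| + t & witnessed Y Y].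
Proof.
elim: t X S => [|t IH] X S invXS le_M le_S; case: (invXS) => XSD ltXS wX.
  exists X; rewrite addn0; split=> //; first exact: subset_trans (subsetUl X S) XSD.
  exact: witnessedS (subsetUl X S) wX.
have [j0 j0S] : exists j, j \in S by apply/card_gt0P; apply: leq_trans le_S; rewrite expn_gt0.
case: (arg_minnP rank j0S) => j jS j_min; have {}jS : j \in S := jS.
have [S' invS' le_S'] := greedy_step invXS jS j_min.
have jX : j \notin X by apply/negP => /ltXS /(_ jS); rewrite ltnn.
have cardjX : #|j |: X| = #|X|.+1 by rewrite cardsU1 jX.
have [||Y [YD cardY wY]] := IH (j |: X) S' invS'.
- by rewrite cardjX addSn -addnS.
- apply: greedy_bound_step K_gt0 _ _ le_S'; first by apply: leq_trans le_M; rewrite leq_addr.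
  by move: le_S; rewrite (cardsD1 j S) jS.
by exists Y; rewrite cardY cardjX addSnnS.
Qed.

Lemma greedy_selection (M : nat) : (K ^ M).+1 ^ M <= #|D| ->
  exists X : {set T}, [/\ X \subset D, #|X| = M & witnessed X X].
Proof.
move=> le_D; have [||X [XD cardX wX]] := @greedy_extend M M set0 D _ _ le_D.
- by split; rewrite ?set0U // => p r; rewrite inE.
- by rewrite cards0.
- by exists X; rewrite cardX cards0.
Qed.

End GreedySelection.

(* The parts V_ij with i >= j may be empty, so a choice of vertices such as gamma
   is only defined under a proof of i < j; [oapply] evaluates it when such a proof
   exists, which lets us state boolean predicates over arbitrary indices. *)
Definition oapply (b : bool) (T : Type) (f : b -> T) : option T :=
  (if b as c return (c -> T) -> option T then fun f => Some (f isT) else fun _ => None) f.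

Lemma oapplyE (b : bool) (T : Type) (f : b -> T) (h : b) : oapply f = Some (f h).
Proof. by case: b f h => f h //=; rewrite (bool_irrelevance h isT). Qed.

Definition selection (N : nat) (H : parthyp N) := forall i k : 'I_N, i < k -> part H i k.

Section Triads.

Variables (N : nat) (H : parthyp N) (gamma : selection H).
Arguments gamma : clear implicits.
Variable K : nat.
Hypothesis K_gt0 : 0 < K.
Hypothesis gamma_dense : forall i j k : 'I_N, i < j -> j < k -> forall hik : i < k,
  2 * (#|part H i j| * #|part H j k|) <=
    K * #|[set p : part H i j * part H j k | edge p.1 p.2 (gamma i k hik)]|.

Definition link {a j y : 'I_N} (x : part H a j) (b : part H j y) : bool :=
  if oapply (gamma a y) is Some z then edge x b z else false.

Definition rich {a j : 'I_N} (x : part H a j) (y : 'I_N) : bool :=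
  #|part H j y| <= K * #|[set b : part H j y | link x b]|.

Lemma exists_rich_vertex (a j : 'I_N) (S : {set 'I_N}) : a < j -> {in S, forall y : 'I_N, j < y} ->
  exists x : part H a j, #|S| <= K * #|[set y in S | rich x y]|.
Proof.
move=> aj S_gt; apply: pigeonhole_average; first exact: part_nonempty.
move=> y /S_gt jy; apply: dense_rows; first exact: part_nonempty.
have ay := ltn_trans aj jy.
have -> : [set p : part H a j * part H j y | link p.1 p.2] =
          [set p | edge p.1 p.2 (gamma a y ay)].
  by apply/setP => p; rewrite !inE /link (oapplyE _ ay).
exact: gamma_dense.
Qed.

Lemma rich_alpha_selection (M : nat) : (K ^ M).+1 ^ M <= N ->
  exists (X : {set 'I_N}) (alpha : selection H), #|X| = M /\
    forall (a b c : 'I_N) (ab : a < b),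
      a \in X -> b \in X -> c \in X -> b < c -> rich (alpha a b ab) c.
Proof.
move=> le_N.
have witness (a b : 'I_N) (S : {set 'I_N}) :
    a \in setT -> b \in setT -> a < b -> S \subset setT -> {in S, forall c : 'I_N, b < c} ->
    exists x : part H a b, #|S| <= K * #|[set c in S | rich x c]|.
  by move=> _ _ ab _; apply: exists_rich_vertex.
have [|X [_ cardX wX]] := @greedy_selection _ (@nat_of_ord N) K setT (fun a b => part H a b)
  (fun a b x => rich x) (@ord_inj N) K_gt0 witness M; first by rewrite cardsT card_ord.
have alpha_exists (a b : 'I_N) (ab : a < b) : exists x : part H a b,
    (a \in X) && (b \in X) ==> [forall c in X, (b < c) ==> rich x c].
  have [/andP[aX bX]|_] := boolP ((a \in X) && (b \in X)); first exact: wX.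
  by have /card_gt0P[x _] := part_nonempty H ab; exists x.
exists X, (fun a b ab => xchoose (alpha_exists a b ab)); split=> // a b c ab aX bX cX bc.
have aXbX : (a \in X) && (b \in X) by rewrite aX bX.
have /implyP/(_ aXbX)/forall_inP/(_ c cX)/implyP := xchooseP (alpha_exists a b ab).
exact.
Qed.

Section FixedAlpha.

Variables (X : {set 'I_N}) (alpha : selection H).
Arguments alpha : clear implicits.
Hypothesis alpha_rich : forall (a b c : 'I_N) (ab : a < b),
  a \in X -> b \in X -> c \in X -> b < c -> rich (alpha a b ab) c.

Definition alpha_link (a : 'I_N) {b c : 'I_N} (beta : part H b c) : bool :=
  if oapply (alpha a b) is Some x then link x beta else false.

Lemma exists_linked_beta (b c : 'I_N) (S : {set 'I_N}) :
  b \in X -> c \in X -> b < c -> S \subset X -> {in S, forall a : 'I_N, a < b} ->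
  exists beta : part H b c, #|S| <= K * #|[set a in S | alpha_link a beta]|.
Proof.
move=> bX cX bc SX S_lt; apply: pigeonhole_average; first exact: part_nonempty.
move=> a aS; have ab := S_lt a aS.
have -> : [set beta : part H b c | alpha_link a beta] = [set beta | link (alpha a b ab) beta].
  by apply/setP => beta; rewrite !inE /alpha_link (oapplyE _ ab).
exact: alpha_rich (subsetP SX a aS) bX cX bc.
Qed.

Lemma linked_beta_selection (n : nat) : (K ^ n).+1 ^ n <= #|X| ->
  exists I : {set 'I_N}, [/\ I \subset X, #|I| = n & forall b c : 'I_N, b \in I -> c \in I ->
    b < c -> exists beta : part H b c, [forall a in I, (a < b) ==> alpha_link a beta]].
Proof.
move=> le_X.
(* beta_bc must work for the indices a < b, so indices are selected in decreasing order. *)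
have witness (c b : 'I_N) (S : {set 'I_N}) : c \in X -> b \in X -> rev_ord c < rev_ord b ->
    S \subset X -> {in S, forall a : 'I_N, rev_ord b < rev_ord a} ->
    exists beta : part H b c, #|S| <= K * #|[set a in S | alpha_link a beta]|.
  rewrite ltn_rev_ord => cX bX bc SX S_lt; apply: exists_linked_beta => // a /S_lt.
  by rewrite ltn_rev_ord.
have [I [IX cardI wI]] := @greedy_selection _ (fun i => nat_of_ord (@rev_ord N i)) K X
  (fun c b => part H b c) (fun c b beta a => alpha_link a beta)
  (inj_comp val_inj rev_ord_inj) K_gt0 witness n le_X.
exists I; split=> // b c bI cI bc.
have [|beta /forall_inP wbeta] := wI c b cI bI; first by rewrite ltn_rev_ord.
by exists beta; apply/forall_inP => a aI; move: (wbeta a aI); rewrite ltn_rev_ord.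
Qed.

End FixedAlpha.

End Triads.

Local Open Scope ring_scope.

Lemma triad_deg_edge_bound (R : realType) (N : nat) (H : parthyp N) (i j k : 'I_N)
    (v : part H i k) (delta : R) (K : nat) :
  (i < j)%N -> (j < k)%N -> 2 < K%:R * delta -> delta <= triad_deg R H i j k v ->
  (2 * (#|part H i j| * #|part H j k|) <=
     K * #|[set p : part H i j * part H j k | edge p.1 p.2 v]|)%N.
Proof.
move=> ij jk lt2K; rewrite /triad_deg.
set E := #|[set _ | _]|; set D := (#|part H i j| * #|part H j k|)%N.
have D_gt0 : 0 < D%:R :> R by rewrite ltr0n muln_gt0 !part_nonempty.
rewrite ler_pdivlMr // => le_E; rewrite -(ler_nat R) (natrM _ 2 D) (natrM _ K E).
apply: le_trans (_ : K%:R * (delta * D%:R) <= _); last by rewrite ler_wpM2l.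
by rewrite mulrA; apply: ler_wpM2r; rewrite ?ltW.
Qed.

Theorem lemma4p6 (R : realType) (delta : R) (hdelta : 0 < delta) (n : nat) :
  exists N : nat,
  forall (H : parthyp N)
         (gamma : forall i k : 'I_N, (i < k)%N -> part H i k),
  (forall (i j k : 'I_N) (hij : (i < j)%N) (hjk : (j < k)%N) (hik : (i < k)%N),
      delta <= triad_deg R H i j k (gamma i k hik)) ->
  exists f : 'I_n -> 'I_N,
    {homo f : x y / (x < y)%N} /\
    exists alpha beta : forall i j : 'I_n, (i < j)%N -> part H (f i) (f j),
      forall (i j k : 'I_n) (hij : (i < j)%N) (hjk : (j < k)%N)
             (hik : (f i < f k)%N),
        @edge N H _ _ _ (alpha i j hij) (beta j k hjk) (gamma (f i) (f k) hik).
Proof.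
pose K := Num.Def.archi_bound (2 / delta).
have lt2K : 2 < K%:R * delta by rewrite -ltr_pdivrMr // archi_boundP // divr_ge0 // ltW.
have K_gt0 : (0 < K)%N by rewrite lt0n; apply: contraTneq lt2K => ->; rewrite mul0r ltNge ler0n.
pose M := ((K ^ n).+1 ^ n)%N.
exists ((K ^ M).+1 ^ M)%N => H gamma gamma_deg.
have gamma_dense i j k ij jk ik := triad_deg_edge_bound ij jk lt2K (gamma_deg i j k ij jk ik).
have [X [alpha [cardX alpha_rich]]] := rich_alpha_selection K_gt0 gamma_dense (leqnn _).
have le_X : ((K ^ n).+1 ^ n <= #|X|)%N by rewrite cardX.
have [I [_ cardI beta_ex]] := linked_beta_selection K_gt0 alpha_rich le_X.
have [f [f_mono fI]] := increasing_enum cardI.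
exists f; split=> //.
exists (fun i j ij => alpha (f i) (f j) (f_mono i j ij)).
exists (fun j k jk => xchoose (beta_ex (f j) (f k) (fI j) (fI k) (f_mono j k jk))).
move=> i j k ij jk ik.
have /forall_inP/(_ (f i) (fI i))/implyP/(_ (f_mono i j ij)) :=
  xchooseP (beta_ex (f j) (f k) (fI j) (fI k) (f_mono j k jk)).
by rewrite /alpha_link /link !(oapplyE _ (f_mono i j ij)) (oapplyE _ ik).
Qed.
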